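(* Let $\varepsilon>0$ and $\theta,\bar\theta,\varphi,\bar\varphi,\alpha,\bar\alpha\in\mathbb{R}$ with $|\theta-\bar\theta|,|\varphi-\bar\varphi|,|\alpha-\bar\alpha|\le\varepsilon$. Then \[ \|R(\alpha)M(\theta,\varphi)-R(\bar\alpha)M(\bar\theta,\bar\varphi)\|<\sqrt5\varepsilon. \]
   Context: $R(\alpha)=\begin{pmatrix}\cos\alpha&-\sin\alpha\\ \sin\alpha&\cos\alpha\end{pmatrix}$, $M(\theta,\varphi)=\begin{pmatrix}-\sin\theta&\cos\theta&0\\ -\cos\theta\cos\varphi&-\sin\theta\cos\varphi&\sin\varphi\end{pmatrix}$; $\|\cdot\|$ is the operator norm induced by Euclidean norms. *)

From HB Require Import structures.
From mathcomp Require Import all_boot all_order all_algebra.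
From mathcomp Require Import all_classical all_reals all_analysis.
Set Implicit Arguments. Unset Strict Implicit. Unset Printing Implicit Defensive.
Import Order.TTheory GRing.Theory Num.Theory.
Local Open Scope ring_scope.
Local Open Scope classical_set_scope.

Definition enorm {R : realType} {n : nat} (x : 'cV[R]_n) : R :=
  Num.sqrt (\sum_(i < n) x i 0 ^+ 2).

Definition opnorm {R : realType} {m n : nat} (A : 'M[R]_(m, n)) : R :=
  sup [set enorm (A *m x) | x in [set x : 'cV[R]_n | enorm x <= 1]].

Definition rotR {R : realType} (a : R) : 'M[R]_2 :=
  \matrix_(i < 2, j < 2)
    if (i == 0 :> nat) then (if (j == 0 :> nat) then cos a else - sin a)
    else (if (j == 0 :> nat) then sin a else cos a).

Definition Mtp {R : realType} (t p : R) : 'M[R]_(2, 3) :=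
  \matrix_(i < 2, j < 3)
    if (i == 0 :> nat) then
      (if (j == 0 :> nat) then - sin t else if (j == 1 :> nat) then cos t else 0)
    else
      (if (j == 0 :> nat) then - (cos t * cos p)
       else if (j == 1 :> nat) then - (sin t * cos p) else sin p).

From HB Require Import structures.
From mathcomp Require Import all_boot all_order all_algebra.
From mathcomp Require Import all_classical all_reals all_analysis.
From mathcomp Require Import ring lra.
Import Order.TTheory GRing.Theory Num.Theory numFieldNormedType.Exports.
Local Open Scope ring_scope.

Set Implicit Arguments.
Unset Strict Implicit.
Unset Printing Implicit Defensive.

(* R(a) M(t, p) is the top 2 x 3 block of the rotation R_z(a - pi/2) R_y(-p) R_z(-t),
   i.e. of v |-> q v q^* for a unit quaternion q whose coordinates are products of
   cosines and sines of half angles. For unit quaternions q, q' the rotations differ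
   by at most 2 sqrt(1 - <q, q'>^2) in operator norm. Expressing <q, q'> through
   the half-angle differences and using |sin x| <= |x| and cos x >= 1 - x^2/2 gives
   <q, q'> >= 1 - 5 eps^2 / 8, hence 4 (1 - <q, q'>^2) < 5 eps^2 (the case
   5 eps^2 > 4 being trivial). *)

Lemma sum_ord2 (V : nmodType) (F : 'I_2 -> V) : \sum_i F i = F 0 + F 1.
Proof. by rewrite !big_ord_recl big_ord0 addr0; congr (_ + F _); apply: val_inj. Qed.

Lemma sum_ord3 (V : nmodType) (F : 'I_3 -> V) : \sum_i F i = F 0 + F 1 + F 2.
Proof.
by rewrite !big_ord_recl big_ord0 addr0 addrA; congr (_ + F _ + F _); apply: val_inj.
Qed.

Section Quaternions.
Variable R : comPzRingType.
Local Notation quat := (R * R * R * R)%type.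
Local Notation vec3 := (R * R * R)%type.

Definition qmul (p q : quat) : quat :=
  let '(a1, b1, c1, d1) := p in let '(a2, b2, c2, d2) := q in
  (a1 * a2 - b1 * b2 - c1 * c2 - d1 * d2, a1 * b2 + b1 * a2 + c1 * d2 - d1 * c2,
   a1 * c2 - b1 * d2 + c1 * a2 + d1 * b2, a1 * d2 + b1 * c2 - c1 * b2 + d1 * a2).

Definition qnorm2 (q : quat) : R :=
  let '(w, x, y, z) := q in w ^+ 2 + x ^+ 2 + y ^+ 2 + z ^+ 2.

Definition qdot (q q' : quat) : R :=
  let '(w, x, y, z) := q in let '(w', x', y', z') := q' in
  w * w' + x * x' + y * y' + z * z'.

(* The map v |-> q v q^*, a rotation of R^3 when q is a unit quaternion. *)
Definition qrot (q : quat) (v : vec3) : vec3 :=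
  let '(w, x, y, z) := q in let '(v1, v2, v3) := v in
  ((w * w + x * x - y * y - z * z) * v1 + 2 * (x * y - w * z) * v2
     + 2 * (x * z + w * y) * v3,
   2 * (x * y + w * z) * v1 + (w * w - x * x + y * y - z * z) * v2
     + 2 * (y * z - w * x) * v3,
   2 * (x * z - w * y) * v1 + 2 * (y * z + w * x) * v2
     + (w * w - x * x - y * y + z * z) * v3).

Definition vnorm2 (v : vec3) : R :=
  let '(v1, v2, v3) := v in v1 ^+ 2 + v2 ^+ 2 + v3 ^+ 2.

Definition vdist2 (u v : vec3) : R :=
  let '(u1, u2, u3) := u in let '(v1, v2, v3) := v in
  (u1 - v1) ^+ 2 + (u2 - v2) ^+ 2 + (u3 - v3) ^+ 2.

Lemma qrotM (p q : quat) (v : vec3) : qrot (qmul p q) v = qrot p (qrot q v).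
Proof.
case: p => [[[a1 b1] c1] d1]; case: q => [[[a2 b2] c2] d2]; case: v => [[v1 v2] v3].
by rewrite /=; congr (_, _, _); ring.
Qed.

Lemma qnorm2M (p q : quat) : qnorm2 (qmul p q) = qnorm2 p * qnorm2 q.
Proof.
by case: p => [[[a1 b1] c1] d1]; case: q => [[[a2 b2] c2] d2]; rewrite /=; ring.
Qed.

End Quaternions.

Lemma qrot_dist2_le (R : realFieldType) (q q' : R * R * R * R) (v : R * R * R) :
  qnorm2 q = 1 -> qnorm2 q' = 1 ->
  vdist2 (qrot q v) (qrot q' v) <= 4 * (1 - qdot q q' ^+ 2) * vnorm2 v.
Proof.
case: q => [[[w x] y] z]; case: q' => [[[w' x'] y'] z']; case: v => [[v1 v2] v3].
set q := (w, x, y, z); set q' := (w', x', y', z'); set v := (v1, v2, v3).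
move=> q1 q'1; set u := qdot q q'.
(* (u, r1, r2, r3) is the quaternion q^* q' *)
pose r1 := w * x' - x * w' - y * z' + z * y'.
pose r2 := w * y' + x * z' - y * w' - z * x'.
pose r3 := w * z' - x * y' + y * x' - z * w'.
set rv := r1 * v1 + r2 * v2 + r3 * v3.
have r_norm2 : r1 ^+ 2 + r2 ^+ 2 + r3 ^+ 2 = qnorm2 q * qnorm2 q' - u ^+ 2.
  by rewrite /u /r1 /r2 /r3 /=; ring.
have -> : vdist2 (qrot q v) (qrot q' v) = (qnorm2 q ^+ 2 + qnorm2 q' ^+ 2) * vnorm2 v
    - 2 * (u ^+ 2 - (r1 ^+ 2 + r2 ^+ 2 + r3 ^+ 2)) * vnorm2 v - 4 * rv ^+ 2.
  by rewrite /u /rv /r1 /r2 /r3 /=; ring.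
rewrite r_norm2 q1 q'1.
have := sqr_ge0 rv; lra.
Qed.

Section Trigonometry.
Variable R : realType.
Implicit Types x z h : R.

Lemma cos_half_sqr x : cos x = cos (x / 2) ^+ 2 - sin (x / 2) ^+ 2.
Proof. by rewrite {1}(splitr x) cosD -!expr2. Qed.

Lemma sin_half_mul x : sin x = 2 * sin (x / 2) * cos (x / 2).
Proof. by rewrite {1}(splitr x) sinD; ring. Qed.

Lemma normr_sin_le x : `|sin x| <= `|x|.
Proof.
wlog x_ge0 : x / 0 <= x.
  move=> sin_le; have [/sin_le//|x_lt0] := leP 0 x.
  by rewrite -normrN -sinN -(normrN x) sin_le // oppr_ge0 ltW.
have [|c _] := @MVT_segment R sin cos 0 x x_ge0 (fun y _ => is_derive_sin y).
  exact/continuous_subspaceT/continuous_sin.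
by rewrite sin0 !subr0 => ->; rewrite normrM ler_piMl ?cos_max.
Qed.

Lemma cos_ge_1_sub_half_sqr z h : `|z| <= h -> 1 - h ^+ 2 / 2 <= cos z.
Proof.
move=> z_le_h.
have half_le : `|z / 2| <= h / 2.
  by move: z_le_h; rewrite !ler_norml => /andP[]; lra.
have := le_trans (normr_sin_le _) half_le.
rewrite cos_half_sqr cos2sin2 -(real_normK (num_real (sin _))).
have := normr_ge0 (sin (z / 2)); nra.
Qed.

End Trigonometry.

Section EulerQuaternion.
Variable R : realType.
Implicit Types t p a x : R.

Definition zquat x : R * R * R * R := (cos (x / 2), 0, 0, sin (x / 2)).
Definition yquat x : R * R * R * R := (cos (x / 2), 0, sin (x / 2), 0).
Definition zyz_quat t p a := qmul (zquat a) (qmul (yquat p) (zquat t)).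

Lemma qrot_zquat x v1 v2 v3 :
  qrot (zquat x) (v1, v2, v3) = (cos x * v1 - sin x * v2, sin x * v1 + cos x * v2, v3).
Proof.
rewrite /= [cos x]cos_half_sqr [sin x]sin_half_mul; congr (_, _, _); try ring.
by rewrite -[RHS]mul1r -[1 in RHS](cos2Dsin2 (x / 2)); ring.
Qed.

Lemma qrot_yquat x v1 v2 v3 :
  qrot (yquat x) (v1, v2, v3) = (cos x * v1 + sin x * v3, v2, - sin x * v1 + cos x * v3).
Proof.
rewrite /= [cos x]cos_half_sqr [sin x]sin_half_mul; congr (_, _, _); try ring.
by rewrite -[RHS]mul1r -[1 in RHS](cos2Dsin2 (x / 2)); ring.
Qed.

Lemma qnorm2_zyz_quat t p a : qnorm2 (zyz_quat t p a) = 1.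
Proof.
have qnorm2_zquat x : qnorm2 (zquat x) = 1 by rewrite -(cos2Dsin2 (x / 2)) /=; ring.
have qnorm2_yquat x : qnorm2 (yquat x) = 1 by rewrite -(cos2Dsin2 (x / 2)) /=; ring.
by rewrite !qnorm2M !qnorm2_zquat qnorm2_yquat !mulr1.
Qed.

Lemma qdot_zyz_quat t p a t' p' a' :
  qdot (zyz_quat t p a) (zyz_quat t' p' a') =
  cos (p / 2 - p' / 2) * cos (t / 2 - t' / 2) * cos (a / 2 - a' / 2)
  - cos (p / 2 + p' / 2) * sin (t / 2 - t' / 2) * sin (a / 2 - a' / 2).
Proof. by rewrite !cosB !sinB cosD /=; ring. Qed.

Lemma qdot_zyz_quat_ge t p a t' p' a' e :
  `|t - t'| <= e -> `|p - p'| <= e -> `|a - a'| <= e -> e ^+ 2 <= 8 ->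
  1 - 5 * e ^+ 2 / 8 <= qdot (zyz_quat t p a) (zyz_quat t' p' a').
Proof.
move=> t_near p_near a_near e_le; rewrite qdot_zyz_quat.
have half_near y y' : `|y - y'| <= e -> `|y / 2 - y' / 2| <= e / 2.
  by rewrite !ler_norml => /andP[]; lra.
set k := 1 - (e / 2) ^+ 2 / 2.
have k_ge0 : 0 <= k by rewrite /k; lra.
have cos_ge y y' : `|y - y'| <= e -> k <= cos (y / 2 - y' / 2).
  by move/half_near; apply: cos_ge_1_sub_half_sqr.
have sin_le y y' : `|y - y'| <= e -> `|sin (y / 2 - y' / 2)| <= e / 2.
  by move/half_near; apply: le_trans (normr_sin_le _).
have cos3_ge : k * k * k <=
    cos (p / 2 - p' / 2) * cos (t / 2 - t' / 2) * cos (a / 2 - a' / 2).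
  by rewrite !ler_pM ?mulr_ge0 ?cos_ge.
have sin2_le : `|cos (p / 2 + p' / 2) * sin (t / 2 - t' / 2) * sin (a / 2 - a' / 2)|
    <= 1 * (e / 2) * (e / 2).
  by rewrite !normrM !ler_pM ?mulr_ge0 ?cos_max ?sin_le.
move: sin2_le; rewrite ler_norml => /andP[_ sin2_le].
have : 0 <= (e / 2) ^+ 2 by apply: sqr_ge0.
rewrite /k in k_ge0 cos3_ge *; nra.
Qed.

End EulerQuaternion.

Section OperatorNorm.
Variable R : realType.

Lemma enorm0 n : enorm (0 : 'cV[R]_n) = 0.
Proof. by rewrite /enorm big1 ?sqrtr0 // => i _; rewrite mxE expr0n. Qed.

Lemma opnorm_le_sqrt m n (A : 'M[R]_(m, n)) c :
  (forall x, enorm (A *m x) ^+ 2 <= c * enorm x ^+ 2) -> opnorm A <= Num.sqrt c.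
Proof.
move=> A_bound; apply: ge_sup.
  by exists (enorm (A *m 0)); exists 0; rewrite //= enorm0.
move=> _ [x x_le1 <-].
have enorm_ge0 (y : 'cV[R]_m) : 0 <= enorm y by apply: sqrtr_ge0.
rewrite -(ger0_norm (enorm_ge0 _)) -sqrtr_sqr.
apply: le_trans (ler_wsqrtr (A_bound x)) _.
rewrite mulrC sqrtrM ?sqr_ge0 // sqrtr_sqr ger0_norm ?sqrtr_ge0 //.
by rewrite ler_piMl ?sqrtr_ge0.
Qed.

End OperatorNorm.

Section RotationBlock.
Variable R : realType.
Implicit Types t p a : R.

Definition coord3 (x : 'cV[R]_3) : R * R * R := (x 0 0, x 1 0, x 2 0).

Lemma enorm_sqr_coord3 (x : 'cV[R]_3) : enorm x ^+ 2 = vnorm2 (coord3 x).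
Proof. by rewrite /enorm sqr_sqrtr ?sum_ord3 // !addr_ge0 ?sqr_ge0. Qed.

Definition euler_quat t p a := zyz_quat (- t) (- p) (a - pi / 2).

Lemma rotR_Mtp_mulmx t p a (x : 'cV[R]_3) :
  let w := qrot (euler_quat t p a) (coord3 x) in
  (rotR a *m Mtp t p *m x) 0 0 = w.1.1 /\ (rotR a *m Mtp t p *m x) 1 0 = w.1.2.
Proof.
rewrite /euler_quat /zyz_quat /coord3 !qrotM.
(* innermost rotation first: after reduction the outer one matches as well *)
rewrite [qrot (zquat (- t)) _]qrot_zquat qrot_yquat qrot_zquat.
rewrite cosBpihalf sinBpihalf !cosN !sinN.
by rewrite !mxE !sum_ord3 !mxE !sum_ord2 !mxE /=; split; ring.
Qed.

Lemma enorm_rotR_Mtp_diff_sqr_le t p a t' p' a' (x : 'cV[R]_3) :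
  enorm ((rotR a *m Mtp t p - rotR a' *m Mtp t' p') *m x) ^+ 2
  <= vdist2 (qrot (euler_quat t p a) (coord3 x)) (qrot (euler_quat t' p' a') (coord3 x)).
Proof.
have [w0 w1] := rotR_Mtp_mulmx t p a x.
have [w0' w1'] := rotR_Mtp_mulmx t' p' a' x.
have entryB (u v : 'cV[R]_2) i : (u - v) i 0 = u i 0 - v i 0 by rewrite !mxE.
rewrite /enorm sqr_sqrtr; last by apply: sumr_ge0 => i _; apply: sqr_ge0.
rewrite mulmxBl sum_ord2 !entryB w0 w1 w0' w1'.
move: (qrot _ (coord3 x)) (qrot _ (coord3 x)) => [[u1 u2] u3] [[v1 v2] v3] /=.
by rewrite lerDl sqr_ge0.
Qed.

Lemma opnorm_rotR_Mtp_diff_le t p a t' p' a' :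
  opnorm (rotR a *m Mtp t p - rotR a' *m Mtp t' p')
  <= Num.sqrt (4 * (1 - qdot (euler_quat t p a) (euler_quat t' p' a') ^+ 2)).
Proof.
apply: opnorm_le_sqrt => x; rewrite enorm_sqr_coord3.
apply: le_trans (enorm_rotR_Mtp_diff_sqr_le _ _ _ _ _ _ x) _.
by apply: qrot_dist2_le; apply: qnorm2_zyz_quat.
Qed.

Lemma qdot_euler_quat_ge t p a t' p' a' e :
  `|t - t'| <= e -> `|p - p'| <= e -> `|a - a'| <= e -> e ^+ 2 <= 8 ->
  1 - 5 * e ^+ 2 / 8 <= qdot (euler_quat t p a) (euler_quat t' p' a').
Proof.
move=> t_near p_near a_near; apply: qdot_zyz_quat_ge.
- by rewrite opprK addrC distrC.
- by rewrite opprK addrC distrC.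
- by rewrite opprB addrA subrK.
Qed.

End RotationBlock.

Theorem lemma3p8 (R : realType) (eps t t' p p' a a' : R) :
  0 < eps ->
  `|t - t'| <= eps -> `|p - p'| <= eps -> `|a - a'| <= eps ->
  opnorm (rotR a *m Mtp t p - rotR a' *m Mtp t' p') < Num.sqrt 5 * eps.
Proof.
move=> eps_gt0 t_near p_near a_near.
apply: le_lt_trans (opnorm_rotR_Mtp_diff_le t p a t' p' a') _.
have -> : Num.sqrt 5 * eps = Num.sqrt (5 * eps ^+ 2).
  by rewrite sqrtrM // sqrtr_sqr gtr0_norm.
rewrite ltr_sqrt ?mulr_gt0 ?exprn_gt0 //.
set u := qdot _ _.
have [eps_big|eps_small] := ltP 4 (5 * eps ^+ 2).
  by have := sqr_ge0 u; lra.
have u_ge : 1 - 5 * eps ^+ 2 / 8 <= u.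
  by apply: qdot_euler_quat_ge => //; lra.
have := exprn_gt0 4 eps_gt0; nra.
Qed.
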